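(* For a ring $R$, the following are equivalent: (1) $R$ is right Noetherian; (2) every $F$-injective right $R$-module is injective; (3) every $F$-injective right $R$-module is quasi-pseudo principally injective.
   Context: All rings are associative with identity and all modules are unitary right $R$-modules. A right $R$-module $M$ is $F$-injective if for every finitely generated right ideal $I$ of $R$, every $R$-homomorphism $I\to M$ extends to an $R$-homomorphism $R\to M$. A submodule $A$ of $M$ is $M$-cyclic if $A\cong M/L$ for some submodule $L$ of $M$ (equivalently, $A$ is the image of an endomorphism of $M$). $M$ is quasi-pseudo principally injective if for every $M$-cyclic submodule $A$ of $M$, every $R$-monomorphism $A\to M$ extends to an $R$-endomorphism of $M$. *)

(* Right R-modules are modelled as left modules over the
   converse ring R^c (lmodType R^c): for m : M and r : R, the right action
   m.r is written  r *: m  (with r : R^c).  The right regular module R_R is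
   (R^c)^o, where  r *: x = x * r. *)
From HB Require Import structures.
From mathcomp Require Import all_boot all_order all_algebra.
Set Implicit Arguments. Unset Strict Implicit. Unset Printing Implicit Defensive.
Import GRing.Theory.
Local Open Scope ring_scope.

Notation rmodType R := (lmodType (R^c)%type).
Notation RR R := ((R^c)^o)%type.

Section Defs.
Variable R : pzRingType.

Definition submodule (M : rmodType R) (A : M -> Prop) : Prop :=
  [/\ A 0,
      (forall x y, A x -> A y -> A (x + y)) &
      (forall (r : R^c) x, A x -> A (r *: x))].

Definition right_ideal (I : RR R -> Prop) : Prop := @submodule (RR R) I.

Definition fin_gen_submodule (M : rmodType R) (A : M -> Prop) : Prop :=
  exists (n : nat) (s : 'I_n -> M),
    forall x, A x <-> exists c : 'I_n -> R^c, x = \sum_(i < n) c i *: s i.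

Definition right_noetherian : Prop :=
  forall I : nat -> (RR R -> Prop),
    (forall n, right_ideal (I n)) ->
    (forall n x, I n x -> I n.+1 x) ->
    exists N, forall n, (N <= n)%N -> forall x, I n x <-> I N x.

Definition hom_on (M N : rmodType R) (A : M -> Prop) (f : M -> N) : Prop :=
  (forall x y, A x -> A y -> f (x + y) = f x + f y) /\
  (forall (r : R^c) x, A x -> f (r *: x) = r *: f x).

Definition mono_on (M N : rmodType R) (A : M -> Prop) (f : M -> N) : Prop :=
  hom_on A f /\ (forall x y, A x -> A y -> f x = f y -> x = y).

Definition extends_all (B N : rmodType R) (A : B -> Prop) : Prop :=
  forall f : B -> N, hom_on A f ->
    exists g : {linear B -> N}, forall x, A x -> g x = f x.

Definition injective_mod (M : rmodType R) : Prop :=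
  forall (B : rmodType R) (A : B -> Prop), submodule A -> extends_all M A.

Definition F_injective (M : rmodType R) : Prop :=
  forall I : RR R -> Prop, right_ideal I -> fin_gen_submodule I ->
    extends_all M I.

Definition M_cyclic (M : rmodType R) (A : M -> Prop) : Prop :=
  exists h : {linear M -> M}, forall x, A x <-> exists y, x = h y.

Definition quasi_pseudo_principally_injective (M : rmodType R) : Prop :=
  forall A : M -> Prop, M_cyclic A ->
    forall f : M -> M, mono_on A f ->
      exists g : {linear M -> M}, forall x, A x -> g x = f x.

End Defs.

From HB Require Import structures.
From mathcomp Require Import all_boot all_order all_algebra.
From mathcomp Require Import boolp classical_sets.
From mathcomp Require Import ring zify.
Set Implicit Arguments. Unset Strict Implicit. Unset Printing Implicit Defensive.
Import Order.TTheory GRing.Theory Num.Theory.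
Local Open Scope ring_scope.

(* (1) => (2): over a right Noetherian ring every right ideal is finitely
   generated, so F-injectivity is Baer's criterion.  (2) => (3): M-cyclic
   submodules are submodules.

   Both converses rest on Q/Z being an injective cogenerator of abelian groups,
   so that the character module Hom(R, Q/Z) is an injective right R-module.

   (3) => (2): an F-injective M embeds, through its characters, into an
   injective product E of copies of Hom(R, Q/Z).  Then M * E is F-injective,
   hence quasi-pseudo principally injective, and extending (0, i m) |-> (m, 0)
   gives a retraction of E onto M, so M is injective.

   (2) => (1): given a chain (I_n), let a level-n coordinate be a character of
   R_R vanishing on I_n, and consider families of elements of Hom(R, Q/Z)
   indexed by these coordinates and vanishing above some level.  They form an
   F-injective, hence injective, module, so the map sending a in the union to
   its evaluation at every coordinate extends to R_R.  Its value a *: g 1 then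
   vanishes above a level N, and a character separating a from I_N shows that
   the union is I_N. *)

Definition mklinear (R : pzRingType) (U V : lmodType R) (f : U -> V)
    (fP : forall (a : R) u v, f (a *: u + v) = a *: f u + f v) : {linear U -> V} :=
  HB.pack f (GRing.isLinear.Build R U V *:%R f fP).

Lemma mklinearE (R : pzRingType) (U V : lmodType R) (f : U -> V) fP x :
  @mklinear R U V f fP x = f x.
Proof. by []. Qed.

Lemma additive0 (U V : zmodType) (h : U -> V) :
  (forall x y, h (x + y) = h x + h y) -> h 0 = 0.
Proof. by move=> hD; apply: (addrI (h 0)); rewrite -hD !addr0. Qed.

Lemma additiveMz (U V : zmodType) (h : U -> V) :
  (forall x y, h (x + y) = h x + h y) -> forall x (r : int), h (x *~ r) = h x *~ r.
Proof.
move=> hD; have h0 := additive0 hD.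
have hN x : h (- x) = - h x by apply: (addrI (h x)); rewrite -hD !subrr.
have hn x (n : nat) : h (x *~ n) = h x *~ n.
  by elim: n => [|n IH]; rewrite ?mulr0z // -addn1 PoszD !mulrzDr !mulr1z hD IH.
by move=> x [] n; rewrite ?NegzE ?mulrNz ?hN hn.
Qed.

Lemma mulz_closed (V : zmodType) (K : V -> Prop) :
  K 0 -> (forall a b, K a -> K b -> K (a + b)) -> (forall a, K a -> K (- a)) ->
  forall k (r : int), K k -> K (k *~ r).
Proof.
move=> K0 KD KN k r Kk.
have Kn (n : nat) : K (k *~ n).
  by elim: n => [|n IH]; rewrite ?mulr0z // -addn1 PoszD mulrzDr mulr1z; apply: KD.
by case: r => n; rewrite ?NegzE ?mulrNz; [|apply: KN].
Qed.

Section Submodules.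
Variable R : pzRingType.
Implicit Types M N : rmodType R.

Lemma submoduleN M (A : M -> Prop) : submodule A -> forall x, A x -> A (- x).
Proof. by case=> _ _ AZ x Ax; rewrite -scaleN1r; apply: AZ. Qed.

Lemma submodule_sum M (A : M -> Prop) n (c : 'I_n -> R^c) (s : 'I_n -> M) :
  submodule A -> (forall i, A (s i)) -> A (\sum_(i < n) c i *: s i).
Proof. by case=> A0 AD AZ sA; apply: (big_ind A) => // i _; apply: AZ. Qed.

Lemma hom_on0 M N (A : M -> Prop) (f : M -> N) : submodule A -> hom_on A f -> f 0 = 0.
Proof. by case=> A0 _ _ [fD _]; apply: (addrI (f 0)); rewrite -fD ?addr0. Qed.

Lemma hom_on_sum M N (A : M -> Prop) (f : M -> N) n (c : 'I_n -> R^c) (s : 'I_n -> M) :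
  submodule A -> hom_on A f -> (forall i, A (s i)) ->
  f (\sum_(i < n) c i *: s i) = \sum_(i < n) c i *: f (s i).
Proof.
move=> sA hf; elim: n c s => [|n IH] c s As; first by rewrite !big_ord0 (hom_on0 sA hf).
have [_ AD AZ] := sA; have [fD fZ] := hf.
by rewrite !big_ord_recr /= fD ?fZ ?IH //; [apply: submodule_sum | apply: AZ].
Qed.

Lemma injective_F_injective N : injective_mod N -> F_injective N.
Proof. by move=> Ninj I rI _; apply: Ninj. Qed.

Lemma F_injective_prod M N : F_injective M -> F_injective N -> F_injective (M * N)%type.
Proof.
move=> Minj Ninj I rI Ifg f [fD fZ].
have f1 : hom_on I (fun r => (f r).1) by split=> *; rewrite ?fD ?fZ.
have f2 : hom_on I (fun r => (f r).2) by split=> *; rewrite ?fD ?fZ.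
have [g1 g1E] := Minj I rI Ifg _ f1.
have [g2 g2E] := Ninj I rI Ifg _ f2.
pose g r : (M * N)%type := (g1 r, g2 r).
have gP a u v : g (a *: u + v) = a *: g u + g v by rewrite /g !linearP.
by exists (mklinear gP) => x Ix; rewrite mklinearE /g g1E // g2E //; case: (f x).
Qed.

Lemma M_cyclic_submodule M (A : M -> Prop) : M_cyclic A -> submodule A.
Proof.
case=> h hA; split.
- by apply/hA; exists 0; rewrite linear0.
- by move=> _ _ /hA[u ->] /hA[v ->]; apply/hA; exists (u + v); rewrite linearD.
- by move=> r _ /hA[u ->]; apply/hA; exists (r *: u); rewrite linearZ.
Qed.

Lemma injective_qppi M : injective_mod M -> quasi_pseudo_principally_injective M.
Proof. by move=> Minj A /M_cyclic_submodule sA f [hf _]; apply: Minj. Qed.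

End Submodules.

Section Baer.
Local Open Scope classical_set_scope.
Variables (R : pzRingType) (N : rmodType R).
Hypothesis N_baer : forall I : RR R -> Prop, right_ideal I -> extends_all N I.
Variables (B : rmodType R) (A : B -> Prop) (f : B -> N).
Hypotheses (sA : submodule A) (hf : hom_on A f).

(* Graphs of partial extensions of f to submodules of B. *)
Definition partial_ext (G : set (B * N)) :=
  [/\ (forall x y y', G (x, y) -> G (x, y') -> y = y'),
      G (0, 0),
      (forall x y x' y', G (x, y) -> G (x', y') -> G (x + x', y + y')),
      (forall (r : R^c) x y, G (x, y) -> G (r *: x, r *: y)) &
      (forall a, A a -> G (a, f a))].

Lemma graph_partial_ext : partial_ext [set p | A p.1 /\ p.2 = f p.1].
Proof.
have [A0 AD AZ] := sA; have [fD fZ] := hf.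
split=> /=.
- by move=> x y y' [_ ->] [_ ->].
- by rewrite (hom_on0 sA hf).
- by move=> x y x' y' [Ax ->] [Ax' ->]; split; [apply: AD | rewrite fD].
- by move=> r x y [Ax ->]; split; [apply: AZ | rewrite fZ].
- by [].
Qed.

(* The empty relation is admitted so that the empty chain has an upper bound. *)
Lemma partial_ext_chain (F : set (set (B * N))) :
  F `<=` (fun G => G = set0 \/ partial_ext G) -> total_on F subset ->
  (\bigcup_(G in F) G) = set0 \/ partial_ext (\bigcup_(G in F) G).
Proof.
move=> FP Ftot.
have Fext G p : F G -> G p -> partial_ext G by move=> FG Gp; case: (FP G FG) => // G0; rewrite G0 in Gp.
have [[G0 FG0 G0ext]|nF] := pselect (exists2 G, F G & partial_ext G); last first.
  by left; apply/seteqP; split=> // p [G FG Gp]; apply: nF; exists G => //; apply: Fext Gp.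
have common p q : (\bigcup_(G in F) G) p -> (\bigcup_(G in F) G) q ->
    exists G, [/\ F G, partial_ext G, G p & G q].
  move=> [G FG Gp] [H FH Hq]; have [GH|HG] := Ftot G H FG FH.
    by exists H; split=> //; [apply: Fext Hq | apply: GH].
  by exists G; split=> //; [apply: Fext Gp | apply: HG].
right; split.
- by move=> x y y' /common/[apply] -[G [_ [fun_G _ _ _ _] G1 G2]]; apply: fun_G G1 G2.
- by exists G0 => //; case: G0ext.
- move=> x y x' y' /common/[apply] -[G [FG [_ _ add_G _ _] G1 G2]].
  by exists G => //; apply: add_G.
- by move=> r x y [G FG Gp]; exists G => //; have [_ _ _ scale_G _] := Fext _ _ FG Gp; apply: scale_G.
- by move=> a Aa; exists G0 => //; case: G0ext => _ _ _ _; apply.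
Qed.

Definition adjoin (G : set (B * N)) (x : B) (n : N) : set (B * N) :=
  [set p | exists c y (s : R^c), G (c, y) /\ p = (c + s *: x, y + s *: n)].

Lemma sub_adjoin G x n : G `<=` adjoin G x n.
Proof. by move=> [c y] Gp; exists c, y, 0; rewrite !scale0r !addr0. Qed.

Lemma adjoin_point G x n : partial_ext G -> adjoin G x n (x, n).
Proof. by case=> _ G00 _ _ _; exists 0, 0, 1; rewrite !scale1r !add0r. Qed.

Lemma adjoin_partial_ext G x n : partial_ext G ->
  (forall (s : R^c) y, G (s *: x, y) -> y = s *: n) -> partial_ext (adjoin G x n).
Proof.
case=> [fun_G G00 add_G scale_G AG] xn; split.
- move=> b z z' [c [y [s [Gc [-> ->]]]]] [c' [y' [s' [Gc' [/eqP]]]]].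
  rewrite -subr_eq0 => /eqP ec ->.
  have e : c + s *: x = c' + s' *: x by apply: subr0_eq.
  have Gs : G ((s - s') *: x, y' - y).
    have -> : (s - s') *: x = c' - c.
      by apply/eqP; rewrite scalerBl subr_eq addrAC -e addrAC subrr add0r.
    by apply: add_G Gc' _; rewrite -!scaleN1r; apply: scale_G.
  have := xn _ _ Gs; rewrite scalerBl => /eqP; rewrite subr_eq => /eqP ->.
  by rewrite addrAC subrK addrC.
- by exists 0, 0, 0; rewrite !scale0r !addr0.
- move=> b z b' z' [c [y [s [Gc [-> ->]]]]] [c' [y' [s' [Gc' [-> ->]]]]].
  exists (c + c'), (y + y'), (s + s'); split; first exact: add_G.
  by rewrite !scalerDl; congr pair; apply: addrACA.
- move=> r b z [c [y [s [Gc [-> ->]]]]]; exists (r *: c), (r *: y), (r * s).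
  by split; [apply: scale_G | rewrite !scalerDr !scalerA].
- by move=> a Aa; apply: sub_adjoin; apply: AG.
Qed.

(* Baer's hypothesis, applied to the ideal of scalars s with s *: x in the domain of G. *)
Lemma partial_ext_extendable G x : partial_ext G ->
  exists n, forall (s : R^c) y, G (s *: x, y) -> y = s *: n.
Proof.
case=> [fun_G G00 add_G scale_G _].
pose J (s : RR R) := exists y, G ((s : R^c) *: x, y).
have J_ideal : right_ideal J.
  split.
  - by exists 0; rewrite scale0r.
  - by move=> s t [y Gy] [y' Gy']; exists (y + y'); rewrite scalerDl; apply: add_G.
  - by move=> r s [y Gy]; exists (r *: y); rewrite /= -scalerA; apply: scale_G.
pose phi (s : RR R) : N := if pselect (J s) is left Js then projT1 (cid Js) else 0.
have phiE s y : G ((s : R^c) *: x, y) -> phi s = y.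
  move=> Gy; rewrite /phi; case: pselect => [Js|]; last by case; exists y.
  by case: cid => y' /= Gy'; apply: fun_G Gy' Gy.
have phi_hom : hom_on J phi.
  split=> [s t [y Gy] [y' Gy'] | r s [y Gy]].
    by rewrite (phiE s _ Gy) (phiE t _ Gy') (phiE _ (y + y')) // scalerDl; apply: add_G.
  by rewrite (phiE s _ Gy) (phiE _ (r *: y)) //= -scalerA; apply: scale_G.
have [h hE] := N_baer J_ideal phi_hom.
exists (h 1) => s y Gy; rewrite -linearZ /=.
have -> : (s *: (1 : RR R)) = s by rewrite /GRing.scale /= mulr1.
by rewrite hE ?(phiE _ _ Gy) //; exists y.
Qed.

Lemma baer_ext : exists g : {linear B -> N}, forall x, A x -> g x = f x.
Proof.
have [G [G_ext G_max]] := Zorn_bigcup partial_ext_chain.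
have {G_ext} [fun_G G00 add_G scale_G AG] : partial_ext G.
  case: G_ext => // G0; exfalso; apply: (G_max _ _ (or_intror graph_partial_ext)).
  rewrite G0; split=> // /(_ (0, f 0)); apply; split; [by case: sA | by []].
have Gtot x : exists y, G (x, y).
  have Gext : partial_ext G by [].
  have [n xn] := partial_ext_extendable x Gext.
  apply: contrapT => nx; apply: (G_max (adjoin G x n)).
    by split; [apply: sub_adjoin | move=> /(_ (x, n) (adjoin_point x n Gext)) Gx; apply: nx; exists n].
  by right; apply: adjoin_partial_ext.
pose g b : N := projT1 (cid (Gtot b)).
have gE b y : G (b, y) -> g b = y by rewrite /g; case: cid => y' /= Gy' Gy; apply: fun_G Gy' Gy.
have gP a u v : g (a *: u + v) = a *: g u + g v.
  by apply: gE; apply: add_G; [apply: scale_G |]; rewrite /g; case: cid.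
by exists (mklinear gP) => a Aa; rewrite mklinearE; apply: gE; apply: AG.
Qed.

End Baer.

Lemma baer (R : pzRingType) (N : rmodType R) :
  (forall I : RR R -> Prop, right_ideal I -> extends_all N I) -> injective_mod N.
Proof. by move=> N_baer B A sA f hf; apply: baer_ext. Qed.

Section NoetherianFinGen.
Variable R : pzRingType.

Definition span (l : seq (RR R)) (x : RR R) :=
  exists c : 'I_(size l) -> R^c, x = \sum_(i < size l) c i *: l`_i.

Lemma right_ideal_span l : right_ideal (span l).
Proof.
split.
- by exists (fun _ => 0); rewrite big1 // => i _; rewrite scale0r.
- move=> _ _ [c ->] [d ->]; exists (fun i => c i + d i).
  by rewrite -big_split; apply: eq_bigr => i _; rewrite scalerDl.
- move=> r _ [c ->]; exists (fun i => r * c i).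
  by rewrite scaler_sumr; apply: eq_bigr => i _; rewrite scalerA.
Qed.

Lemma span_cons l x y : span l y -> span (x :: l) y.
Proof.
move=> [c ->]; exists (fun i => odflt 0 (omap c (unlift ord0 i))).
rewrite big_ord_recl /= unlift_none scale0r add0r; apply: eq_bigr => i _.
by rewrite liftK.
Qed.

Lemma span_head l x : span (x :: l) x.
Proof.
exists (fun i => if unlift ord0 i is Some _ then 0 else 1).
by rewrite big_ord_recl /= unlift_none scale1r big1 ?addr0 // => i _; rewrite liftK scale0r.
Qed.

(* Otherwise adjoining, again and again, an element outside the span of the
   previous ones yields a strictly ascending chain of right ideals. *)
Lemma noetherian_fin_gen (I : RR R -> Prop) : right_noetherian R -> right_ideal I -> fin_gen_submodule I.
Proof.
move=> noethR rI; apply: contrapT => nfg.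
have grow l : (forall x, x \in l -> I x) -> exists x, I x /\ ~ span l x.
  move=> Il; apply: contrapT => nx; apply: nfg; exists (size l), (fun i => l`_i) => x.
  split=> [Ix|[c ->]]; first by apply: contrapT => nlx; apply: nx; exists x.
  by apply: submodule_sum => // i; apply: Il; apply: mem_nth.
pose next l := if pselect (exists x, I x /\ ~ span l x) is left h then projT1 (cid h) :: l else l.
pose L k := iter k next [::].
have IL k x : x \in L k -> I x.
  elim: k x => [|k IH] x //=; rewrite {1}/next; case: pselect => [h|_]; last exact: IH.
  by case: cid => y [Iy _] /=; rewrite in_cons => /orP[/eqP ->|]; last exact: IH.
have Lstep k : exists x, L k.+1 = x :: L k /\ ~ span (L k) x.
  rewrite /= {1}/next; case: pselect => [h|hn]; last by case: hn; apply: grow; apply: IL.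
  by case: cid => x [_ nx] /=; exists x.
have Lmono k y : span (L k) y -> span (L k.+1) y.
  by have [x [-> _]] := Lstep k; apply: span_cons.
have [n Ln] := noethR (fun k => span (L k)) (fun k => right_ideal_span _) Lmono.
have [x [Lx nx]] := Lstep n; apply: nx; apply/(Ln n.+1 (leqnSn n)).
by rewrite Lx; apply: span_head.
Qed.

End NoetherianFinGen.

Definition frac (x : rat) : rat := x - (Num.floor x)%:~R.

Lemma frac_itv x : (0 <= frac x) && (frac x < 1).
Proof.
rewrite /frac subr_ge0 floor_le /= ltrBlDl.
by have := floorD1_gt x; rewrite intrD.
Qed.

Lemma frac_id x : (0 <= x) && (x < 1) -> frac x = x.
Proof. by move=> x01; rewrite /frac (floor_def (m := 0)) ?subr0. Qed.

Lemma frac_shift x (n : int) : frac (x + n%:~R) = frac x.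
Proof. by rewrite /frac floorDrz ?intr_int // intrKfloor intrD; ring. Qed.

Lemma fracDl x y : frac (frac x + y) = frac (x + y).
Proof. by rewrite -(frac_shift (frac x + y) (Num.floor x)); congr frac; rewrite /frac; ring. Qed.

Lemma fracDr x y : frac (x + frac y) = frac (x + y).
Proof. by rewrite addrC fracDl addrC. Qed.

Lemma fracBr x y : frac (x - frac y) = frac (x - y).
Proof. by rewrite -(frac_shift (x - y) (Num.floor y)); congr frac; rewrite /frac; ring. Qed.

(* Q/Z, represented by the fractional parts in [0, 1). *)
Definition QZ := {q : rat | (0 <= q) && (q < 1)}.
HB.instance Definition _ := Choice.on QZ.

Definition qz (x : rat) : QZ := exist _ (frac x) (frac_itv x).

Lemma qz_val (a : QZ) : qz (val a) = a.
Proof. by apply: val_inj; rewrite /= frac_id //; case: a. Qed.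

Lemma qz_eq x y : qz x = qz y <-> frac x = frac y.
Proof. by split=> [/(congr1 val) | e]; last apply: val_inj. Qed.

Lemma qz_addA : associative (fun a b : QZ => qz (val a + val b)).
Proof. by move=> a b c; apply/qz_eq => /=; rewrite fracDl fracDr addrA. Qed.
Lemma qz_addC : commutative (fun a b : QZ => qz (val a + val b)).
Proof. by move=> a b; apply/qz_eq; rewrite addrC. Qed.
Lemma qz_add0 : left_id (qz 0) (fun a b : QZ => qz (val a + val b)).
Proof. by move=> a; rewrite /= frac_id // add0r qz_val. Qed.
Lemma qz_addN : left_inverse (qz 0) (fun a : QZ => qz (- val a)) (fun a b => qz (val a + val b)).
Proof. by move=> a; apply/qz_eq => /=; rewrite fracDl addNr. Qed.

HB.instance Definition _ := GRing.isZmodule.Build QZ qz_addA qz_addC qz_add0 qz_addN.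

Lemma qz_is_zmod_morphism : zmod_morphism qz.
Proof. by move=> x y; apply/qz_eq => /=; rewrite fracDr fracDl fracBr. Qed.
HB.instance Definition _ := GRing.isZmodMorphism.Build rat QZ qz qz_is_zmod_morphism.

Lemma qz_int (n : int) : qz n%:~R = 0.
Proof. by apply/qz_eq; rewrite -[n%:~R]add0r frac_shift. Qed.

Lemma qz_eq0 x : qz x = 0 -> x \is a Num.int.
Proof.
move/qz_eq; rewrite [frac 0]frac_id // => x0.
by rewrite -[x](subrK (Num.floor x)%:~R) -/(frac x) x0 add0r intr_int.
Qed.

Lemma qz_neq0 x : 0 < x < 1 -> qz x != 0.
Proof.
case/andP=> x0 x1; apply/eqP => /qz_eq0 /intrP[n xn].
by move: x0 x1; rewrite xn ltr0z -[1]/(1%:~R) ltr_int; lia.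
Qed.

Definition intrmod (V : zmodType) : Type := V.

Section IntRmod.
Variable V : zmodType.
HB.instance Definition _ := GRing.Zmodule.on (intrmod V).
Definition intrmod_scale (r : int^c) (v : intrmod V) : intrmod V := (v : V) *~ (r : int).
Lemma intrmod_scaleA a b v : intrmod_scale a (intrmod_scale b v) = intrmod_scale (a * b) v.
Proof. exact: (esym (mulrzA (v : V) b a)). Qed.
Lemma intrmod_scale1 : left_id 1 intrmod_scale.
Proof. by move=> v; rewrite /intrmod_scale mulr1z. Qed.
Lemma intrmod_scaleDr : right_distributive intrmod_scale +%R.
Proof. by move=> a u v; rewrite /intrmod_scale mulrzDl. Qed.
Lemma intrmod_scaleDl v : {morph intrmod_scale^~ v : a b / a + b}.
Proof. by move=> a b; rewrite /intrmod_scale mulrzDr. Qed.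
HB.instance Definition _ := GRing.Zmodule_isLmodule.Build int^c (intrmod V)
  intrmod_scaleA intrmod_scale1 intrmod_scaleDr intrmod_scaleDl.
End IntRmod.

Lemma intrmodZ (V : zmodType) (r : int^c) (v : intrmod V) : r *: v = (v : V) *~ (r : int).
Proof. by []. Qed.

Lemma int_subgroup_cyclic (J : int -> Prop) :
  J 0 -> (forall a b, J a -> J b -> J (a + b)) -> (forall a, J a -> J (- a)) ->
  (forall j, J j -> j = 0) \/ exists2 m : int, 0 < m & forall j, J j <-> (m %| j)%Z.
Proof.
move=> J0 JD JN; have Jmul m k : J m -> J (m * k).
  by rewrite -mulrzz; apply: mulz_closed.
have [[j Jj j0]|J_0] := pselect (exists2 j, J j & j != 0); last first.
  by left=> j Jj; apply: contrapT => /eqP nj; apply: J_0; exists j.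
right; have Jpos : exists n : nat, `[< J n%:Z >] && (0 < n)%N.
  exists `|j|%N; rewrite absz_gt0 j0 andbT; apply/asboolP.
  by case: j Jj {j0} => n Jn //; move/JN: Jn; rewrite NegzE opprK.
case: (ex_minnP Jpos) => m /andP[/asboolP Jm m_gt0] m_min.
exists m%:Z; first by rewrite ltz_nat.
move=> k; split=> [Jk|/divzK <-]; last by rewrite mulrC; apply: Jmul.
have m0 : m%:Z != 0 by rewrite eqz_nat -lt0n.
have Jr : J (k %% m)%Z by rewrite /modz mulrC; apply: JD Jk (JN _ (Jmul _ _ Jm)).
apply/dvdz_mod0P/eqP; apply: contraT => r0.
have := m_min `|(k %% m)%Z|%N; rewrite absz_gt0 r0 andbT gez0_abs ?modz_ge0 // asboolT //.
by have := ltz_mod k m0; have := modz_ge0 k m0; lia.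
Qed.

Lemma QZ_injective : injective_mod (intrmod QZ).
Proof.
apply: baer => I rI phi hphi; have [I0 ID IZ] := rI.
have IN := submoduleN rI.
case: (int_subgroup_cyclic I0 ID IN) => [I_0|[m m_gt0 Im]].
  pose g (_ : RR int) : intrmod QZ := 0.
  have gP a u v : g (a *: u + v) = a *: g u + g v by rewrite scaler0 addr0.
  by exists (mklinear gP) => x Ix; rewrite mklinearE (I_0 x Ix) (hom_on0 rI hphi).
pose q : QZ := qz (val (phi m : QZ) / m%:~R).
pose g (k : RR int) : intrmod QZ := q *~ (k : int).
have gP a u v : g (a *: u + v) = a *: g u + g v.
  by rewrite intrmodZ /g /= mulrzDr; congr (_ + _); rewrite /GRing.scale /= mulrzA.
exists (mklinear gP) => x Ix; rewrite mklinearE /g.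
have /Im mx := Ix; have Im_m : I m by apply/Im.
have xE : ((x %/ m)%Z : int^c) *: (m : RR int) = x.
  by change (m * (x %/ m)%Z = x); rewrite mulrC divzK.
case: hphi => _ /(_ ((x %/ m)%Z : int^c) _ Im_m); rewrite xE => ->.
rewrite intrmodZ -{1}(divzK mx) mulrC mulrzA; congr (_ *~ _).
rewrite /q -raddfMz -mulrzr divfK; first exact: qz_val.
by rewrite intr_eq0 gt_eqF.
Qed.

Lemma QZ_annihilator (J : int -> Prop) :
  J 0 -> (forall a b, J a -> J b -> J (a + b)) -> (forall a, J a -> J (- a)) -> ~ J 1 ->
  exists2 q : QZ, q != 0 & forall j, J j -> q *~ j = 0.
Proof.
move=> J0 JD JN nJ1; case: (int_subgroup_cyclic J0 JD JN) => [J_0|[m m_gt0 Jm]].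
  by exists (qz (1 / 2)); [apply: qz_neq0 | move=> j /J_0 ->; rewrite mulr0z].
have m1 : m != 1 by apply: contra_notN nJ1 => /eqP m1; apply/Jm; rewrite m1.
have m_gt1 : 1 < m by lia.
have m0 : (m%:~R : rat) != 0 by rewrite intr_eq0 gt_eqF.
exists (qz (1 / m%:~R)) => [|j /Jm/divzK <-].
  by apply: qz_neq0; rewrite divr_gt0 ?ltr0z //= ltr_pdivrMr ?ltr0z // mul1r -[1]/(1%:~R) ltr_int.
by rewrite -raddfMz -mulrzr intrM mulrCA div1r mulVf // mulr1; apply: qz_int.
Qed.

Section CharacterSeparation.
Variables (V : zmodType) (K : V -> Prop).
Hypotheses (K0 : K 0) (KD : forall a b, K a -> K b -> K (a + b)) (KN : forall a, K a -> K (- a)).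

Definition cyclic_ext (b : V) (x : intrmod V) := exists k j, K k /\ (x : V) = k + b *~ j.

Lemma submodule_cyclic_ext b : submodule (cyclic_ext b).
Proof.
split.
- by exists 0, 0; rewrite mulr0z addr0.
- move=> _ _ [k [j [Kk ->]]] [k' [j' [Kk' ->]]]; exists (k + k'), (j + j').
  by split; [apply: KD | rewrite mulrzDr addrACA].
- move=> r _ [k [j [Kk ->]]]; exists (k *~ r), (j * r).
  by split; [apply: mulz_closed | rewrite intrmodZ mulrzDl mulrzA].
Qed.

(* The value on k + b *~ j is q *~ j; the hypothesis on q makes it well defined. *)
Lemma cyclic_ext_hom b (q : QZ) : (forall j, K (b *~ j) -> q *~ j = 0) ->
  exists phi : intrmod V -> intrmod QZ,
    [/\ hom_on (cyclic_ext b) phi, forall k, K k -> phi k = 0 & phi b = q].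
Proof.
move=> qJ.
pose phi (x : V) : QZ := if pselect (exists j, K (x - b *~ j)) is left h then q *~ projT1 (cid h) else 0.
have phiE k j : K k -> phi (k + b *~ j) = q *~ j.
  move=> Kk; rewrite /phi; case: pselect => [h|]; last by case; exists j; rewrite addrK.
  case: cid => j' /= Kj'; apply/eqP; rewrite eq_sym -subr_eq0 -mulrzBr qJ //.
  have -> : b *~ (j - j') = k + b *~ j - b *~ j' - k.
    by rewrite addrAC [k + _ - k]addrAC subrr add0r mulrzBr.
  exact: KD Kj' (KN Kk).
exists phi; split.
- split=> [_ _ [k [j [Kk ->]]] [k' [j' [Kk' ->]]] | r _ [k [j [Kk ->]]]].
    by rewrite addrACA -mulrzDr !phiE ?mulrzDr //; apply: KD.
  by rewrite !intrmodZ mulrzDl -mulrzA !phiE ?mulrzA //; apply: mulz_closed.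
- by move=> k Kk; have := phiE k 0 Kk; rewrite !mulr0z addr0.
- by have := phiE 0 1 K0; rewrite !mulr1z add0r.
Qed.

Lemma character_separates b : ~ K b ->
  exists chi : V -> QZ, [/\ forall x y, chi (x + y) = chi x + chi y,
                            forall k, K k -> chi k = 0 & chi b != 0].
Proof.
move=> nKb.
have [q q0 qJ] : exists2 q : QZ, q != 0 & forall j, K (b *~ j) -> q *~ j = 0.
  apply: QZ_annihilator => [|a c|a|]; rewrite ?mulr0z ?mulrzDr ?mulrNz ?mulr1z //.
  - exact: KD.
  - exact: KN.
have [phi [phi_hom phiK phib]] := cyclic_ext_hom qJ.
have [g gE] := QZ_injective (submodule_cyclic_ext b) phi_hom.
exists (fun x => g x); split.
- by move=> x y; rewrite linearD.
- by move=> k Kk; rewrite gE ?phiK //; exists k, 0; rewrite mulr0z addr0.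
- by rewrite gE ?phib //; exists 0, 1; rewrite mulr1z add0r.
Qed.

End CharacterSeparation.

Lemma submodule_intrmod (R : pzRingType) (B : rmodType R) (A : B -> Prop) :
  submodule A -> @submodule _ (intrmod B) A.
Proof. by case=> A0 AD AZ; split=> // r x Ax; rewrite intrmodZ -scaler_int; apply: AZ. Qed.

(* Families (e_x)_(x : X) of elements of the character module Hom(R, Q/Z) of
   R, with (e_x r)(s) = e_x (r s), that vanish above some level of lvl. *)
Section CharacterFamilies.
Variables (R : pzRingType) (X : Type) (lvl : X -> nat).

Definition charfam_axiom (e : X -> R -> QZ) :=
  (forall x s t, e x (s + t) = e x s + e x t) /\
  exists N, forall x, (N <= lvl x)%N -> forall s, e x s = 0.

Definition charfam := {e | charfam_axiom e}.
HB.instance Definition _ := gen_eqMixin charfam.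
HB.instance Definition _ := gen_choiceMixin charfam.

Definition fval (a : charfam) : X -> R -> QZ := sval a.

Lemma fval_inj (a b : charfam) : (forall x s, fval a x s = fval b x s) -> a = b.
Proof.
move: a b => [e eP] [e' e'P] /= ee'; have {ee'} ee' : e = e' by apply/funext => x; apply/funext.
by subst e'; congr exist; apply: Prop_irrelevance.
Qed.

Lemma fvalD_arg (a : charfam) x s t : fval a x (s + t) = fval a x s + fval a x t.
Proof. by case: a => e [eD ?]; apply: eD. Qed.

Lemma charfam0_axiom : charfam_axiom (fun _ _ => 0).
Proof. by split=> [x s t|]; [rewrite addr0 | exists 0%N]. Qed.

Lemma charfam_add_axiom (a b : charfam) : charfam_axiom (fun x s => fval a x s + fval b x s).
Proof.
move: a b => [e [eD [N eN]]] [e' [e'D [N' e'N]]] /=; split=> [x s t|].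
  by rewrite eD e'D addrACA.
by exists (maxn N N') => x; rewrite geq_max => /andP[xN xN'] s; rewrite eN ?e'N ?addr0.
Qed.

Lemma charfam_opp_axiom (a : charfam) : charfam_axiom (fun x s => - fval a x s).
Proof.
case: a => e [eD [N eN]] /=; split=> [x s t|]; first by rewrite eD opprD.
by exists N => x xN s; rewrite eN ?oppr0.
Qed.

Definition charfam0 : charfam := exist _ _ charfam0_axiom.
Definition charfam_add a b : charfam := exist _ _ (charfam_add_axiom a b).
Definition charfam_opp a : charfam := exist _ _ (charfam_opp_axiom a).

Lemma charfam_addA : associative charfam_add.
Proof. by move=> a b c; apply: fval_inj => x s /=; rewrite addrA. Qed.
Lemma charfam_addC : commutative charfam_add.
Proof. by move=> a b; apply: fval_inj => x s /=; rewrite addrC. Qed.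
Lemma charfam_add0 : left_id charfam0 charfam_add.
Proof. by move=> a; apply: fval_inj => x s /=; rewrite add0r. Qed.
Lemma charfam_addN : left_inverse charfam0 charfam_opp charfam_add.
Proof. by move=> a; apply: fval_inj => x s /=; rewrite addNr. Qed.

HB.instance Definition _ :=
  GRing.isZmodule.Build charfam charfam_addA charfam_addC charfam_add0 charfam_addN.

Lemma charfam_scale_axiom (r : R^c) (a : charfam) :
  charfam_axiom (fun x s => fval a x ((r : R) * s)).
Proof.
case: a => e [eD [N eN]] /=; split=> [x s t|]; first by rewrite mulrDr eD.
by exists N => x xN s; rewrite eN.
Qed.

Definition charfam_scale r a : charfam := exist _ _ (charfam_scale_axiom r a).

Lemma charfam_scaleA a b v : charfam_scale a (charfam_scale b v) = charfam_scale (a * b) v.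
Proof. by apply: fval_inj => x s /=; rewrite mulrA. Qed.
Lemma charfam_scale1 : left_id 1 charfam_scale.
Proof. by move=> v; apply: fval_inj => x s /=; rewrite mul1r. Qed.
Lemma charfam_scaleDr : right_distributive charfam_scale +%R.
Proof. by move=> a u v; apply: fval_inj. Qed.
Lemma charfam_scaleDl v : {morph charfam_scale^~ v : a b / a + b}.
Proof. by move=> a b; apply: fval_inj => x s /=; rewrite mulrDl fvalD_arg. Qed.

HB.instance Definition _ := GRing.Zmodule_isLmodule.Build R^c charfam
  charfam_scaleA charfam_scale1 charfam_scaleDr charfam_scaleDl.

Lemma fvalD (a b : charfam) x s : fval (a + b) x s = fval a x s + fval b x s.
Proof. by []. Qed.

Lemma fvalZ (r : R^c) (a : charfam) x s : fval (r *: a) x s = fval a x ((r : R) * s).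
Proof. by []. Qed.

(* Each coordinate a |-> fval (f a) x 1 is a homomorphism of abelian groups,
   which extends since Q/Z is an injective abelian group. *)
Lemma charfam_coord_ext (B : rmodType R) (A : B -> Prop) (f : B -> charfam) x :
  submodule A -> hom_on A f ->
  exists g : {linear intrmod B -> intrmod QZ}, forall b, A b -> g b = fval (f b) x 1.
Proof.
move=> sA [fD fZ]; apply: (QZ_injective (submodule_intrmod sA)); split=> [b b' Ab Ab'|r b Ab].
  by rewrite fD.
by rewrite !intrmodZ -scaler_int fZ // fvalZ -(additiveMz (fvalD_arg (f b) x)) mulr1.
Qed.

Lemma charfam_extend (B : rmodType R) (A : B -> Prop) (f : B -> charfam) (N : nat) :
  submodule A -> hom_on A f ->
  (forall a, A a -> forall x, (N <= lvl x)%N -> forall s, fval (f a) x s = 0) ->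
  exists g : {linear B -> charfam}, forall b, A b -> g b = f b.
Proof.
move=> sA hf fN.
have gx_spec x := charfam_coord_ext x sA hf.
pose gx x := projT1 (cid (gx_spec x)).
have gxE x b : A b -> gx x b = fval (f b) x 1 by rewrite /gx; case: cid => g gE /=; apply: gE.
pose e (b : B) x (s : R) : QZ := if (lvl x < N)%N then gx x ((s : R^c) *: b) else 0.
have eP b : charfam_axiom (e b).
  split=> [x s t|]; last by exists N => x; rewrite /e ltnNge => ->.
  by rewrite /e; case: ifP => _; rewrite ?addr0 // scalerDl; apply: (linearD (gx x)).
pose g b : charfam := exist _ _ (eP b).
have gP a u v : g (a *: u + v) = a *: g u + g v.
  apply: fval_inj => x s; rewrite fvalD fvalZ /= /e.
  by case: ifP => _; rewrite ?addr0 // scalerDr scalerA; apply: (linearD (gx x)).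
exists (mklinear gP) => b Ab; rewrite mklinearE; apply: fval_inj => x s /=; rewrite /e.
case: ifP => [_|/negbT]; last by rewrite -leqNgt => /fN ->.
have [_ _ AZ] := sA; have [_ fZ] := hf.
by rewrite gxE ?fZ ?fvalZ ?mulr1 //; apply: AZ.
Qed.

Lemma charfam_injective (L : nat) : (forall x, (lvl x < L)%N) -> injective_mod charfam.
Proof.
move=> lvlL B A sA f hf; apply: (charfam_extend (N := L)) => // a Aa x.
by rewrite leqNgt lvlL.
Qed.

(* The image of a finitely generated ideal vanishes above the largest level
   bound of the images of its generators. *)
Lemma charfam_F_injective : F_injective charfam.
Proof.
move=> I rI [n [s Is]] f hf.
have sI i : I (s i).
  apply/Is; exists (fun j => if j == i then 1 else 0).
  by rewrite (bigD1 i) //= eqxx scale1r big1 ?addr0 // => j /negbTE ->; rewrite scale0r.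
have Ni_spec i : exists N, forall x, (N <= lvl x)%N -> forall t, fval (f (s i)) x t = 0.
  by case: (f (s i)) => e [? eN].
pose Ni i := projT1 (cid (Ni_spec i)).
have NiP i x : (Ni i <= lvl x)%N -> forall t, fval (f (s i)) x t = 0.
  by rewrite /Ni; case: cid => ? /=; apply.
pose N := (\max_(i < n) Ni i)%N.
pose vanishes (e : charfam) := forall x, (N <= lvl x)%N -> forall t, fval e x t = 0.
have vanishes_sub : submodule vanishes.
  split=> [//|a b va vb x xN t|r a va x xN t]; first by rewrite fvalD va ?vb ?addr0.
  by rewrite fvalZ va.
have f_vanishes a : I a -> vanishes (f a).
  move=> /Is[c ->]; rewrite (hom_on_sum c rI hf sI); apply: submodule_sum => // i x xN.
  by apply: NiP; apply: leq_trans xN; apply: leq_bigmax.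
exact: charfam_extend rI hf f_vanishes.
Qed.

End CharacterFamilies.

Section CharacterEmbedding.
Variables (R : pzRingType) (M : rmodType R).

Definition character := {chi : M -> QZ | forall x y, chi (x + y) = chi x + chi y}.

(* The product of copies of Hom(R, Q/Z) indexed by the characters of M: all
   levels are 0, so the vanishing condition of charfam is void. *)
Definition charprod := charfam R (fun _ : character => 0%N).

Lemma charprod_injective : injective_mod charprod.
Proof. exact: (charfam_injective (L := 1)). Qed.

Lemma charembed_axiom (m : M) :
  charfam_axiom (fun _ : character => 0%N) (fun chi (s : R) => sval chi ((s : R^c) *: m)).
Proof. by split=> [[chi chiD] s t /=|]; [rewrite scalerDl chiD | exists 1%N]. Qed.

Definition charembed_fun (m : M) : charprod := exist _ _ (charembed_axiom m).

Lemma charembed_fun_linear (a : R^c) u v :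
  charembed_fun (a *: u + v) = a *: charembed_fun u + charembed_fun v.
Proof.
by apply: fval_inj => [[chi chiD]] s; rewrite fvalD fvalZ /= scalerDr scalerA chiD.
Qed.

Definition charembed : {linear M -> charprod} := mklinear charembed_fun_linear.

Lemma charembed_inj : injective charembed.
Proof.
move=> m m' mm'; apply: contrapT => /eqP; rewrite -subr_eq0 => /eqP nm.
have zeroD (a b : M) : a = 0 -> b = 0 -> a + b = 0 by move=> -> ->; rewrite addr0.
have zeroN (a : M) : a = 0 -> - a = 0 by move=> ->; rewrite oppr0.
have [chi [chiD _ chim]] := character_separates (erefl (0 : M)) zeroD zeroN nm.
have := congr1 (fun e => fval e (exist _ chi chiD) 1) mm'; rewrite /= !scale1r => chi_mm'.
by move/eqP: chim; apply; apply: (addIr (chi m')); rewrite -chiD subrK add0r.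
Qed.

End CharacterEmbedding.

Section Retracts.
Variable R : pzRingType.

Lemma injective_retract (M E : rmodType R) (i : {linear M -> E}) (r : {linear E -> M}) :
  injective_mod E -> cancel i r -> injective_mod M.
Proof.
move=> Einj iK B A sA f [fD fZ].
have if_hom : hom_on A (fun b => i (f b)).
  by split=> [x y Ax Ay | a x Ax]; rewrite ?fD ?fZ ?linearD ?linearZ.
have [G GE] := Einj B A sA _ if_hom.
pose g b := r (G b).
have gP a u v : g (a *: u + v) = a *: g u + g v by rewrite /g !linearP.
by exists (mklinear gP) => b Ab; rewrite mklinearE /g GE.
Qed.

(* A monomorphism i : M -> E splits as soon as M * E is quasi-pseudo
   principally injective: 0 * i(M) is (M * E)-cyclic, and (0, i m) |-> (m, 0)
   extends to an endomorphism of M * E. *)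
Lemma qppi_prod_retraction (M E : rmodType R) (i : {linear M -> E}) :
  injective i -> quasi_pseudo_principally_injective (M * E)%type ->
  exists r : {linear E -> M}, cancel i r.
Proof.
move=> i_inj qppi.
pose A (p : M * E) := exists m, p = (0, i m).
pose h (p : M * E) : M * E := (0, i p.1).
have hP a u v : h (a *: u + v) = a *: h u + h v.
  by rewrite /h /= linearP; congr pair; rewrite /= scaler0 addr0.
have A_cyclic : M_cyclic A.
  by exists (mklinear hP) => p; split=> [[m ->]|[q ->]]; [exists (m, 0) | exists q.1].
pose iinv (e : E) : M := if pselect (exists m, i m = e) is left ex then projT1 (cid ex) else 0.
have iinvK m : iinv (i m) = m.
  by rewrite /iinv; case: pselect => [ex|[]]; [case: cid => m' /= /i_inj | exists m].
pose f (p : M * E) : M * E := (iinv p.2, 0).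
have f_mono : mono_on A f.
  split; first split.
  - move=> _ _ [m ->] [m' ->]; rewrite /f /= -linearD !iinvK.
    by congr pair; rewrite /= addr0.
  - by move=> a _ [m ->]; rewrite /f /= -linearZ !iinvK; congr pair; rewrite /= scaler0.
  - by move=> _ _ [m ->] [m' ->]; rewrite /f /= !iinvK => -[->].
have [g gE] := qppi A A_cyclic f f_mono.
pose r (e : E) : M := (g (0, e)).1.
have rP a u v : r (a *: u + v) = a *: r u + r v.
  rewrite /r (_ : (0, a *: u + v) = a *: ((0 : M), u) + (0, v)) ?linearP //.
  by congr pair; rewrite /= scaler0 addr0.
by exists (mklinear rP) => m; rewrite mklinearE /r gE /f /= ?iinvK //; exists m.
Qed.

Lemma injective_of_qppi (M : rmodType R) :
  (forall N : rmodType R, F_injective N -> quasi_pseudo_principally_injective N) ->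
  F_injective M -> injective_mod M.
Proof.
move=> qppi Minj.
have MEinj := F_injective_prod Minj (injective_F_injective (@charprod_injective _ M)).
have [r rK] := qppi_prod_retraction (@charembed_inj _ M) (qppi _ MEinj).
exact: injective_retract (@charprod_injective _ M) rK.
Qed.

End Retracts.

Section AscendingChain.
Variables (R : pzRingType) (I : nat -> (RR R -> Prop)).
Hypotheses (I_ideal : forall n, right_ideal (I n)) (I_mono : forall n x, I n x -> I n.+1 x).

Lemma chain_le k n x : (k <= n)%N -> I k x -> I n x.
Proof. by move=> /subnK <-; elim: (n - k)%N => // d IH Ix; apply: I_mono; apply: IH. Qed.

Definition chain_union (x : RR R) := exists k, I k x.

Lemma right_ideal_chain_union : right_ideal chain_union.
Proof.
split.
- by exists 0%N; case: (I_ideal 0).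
- move=> a b [k Ia] [k' Ib]; exists (maxn k k'); case: (I_ideal (maxn k k')) => _ ID _.
  by apply: ID; [apply: chain_le Ia; apply: leq_maxl | apply: chain_le Ib; apply: leq_maxr].
- by move=> r a [k Ia]; exists k; case: (I_ideal k) => _ _; apply.
Qed.

Definition chain_character :=
  {p : nat * (RR R -> QZ) | (forall a b, p.2 (a + b) = p.2 a + p.2 b) /\
                            (forall a, I p.1 a -> p.2 a = 0)}.

Definition chain_level (x : chain_character) : nat := (sval x).1.

Lemma chain_fam_axiom a : chain_union a ->
  charfam_axiom chain_level (fun x (s : R) => (sval x).2 ((s : R^c) *: a)).
Proof.
move=> [k Ia]; split=> [[[n chi] [chiD ?]] s t /=|]; first by rewrite scalerDl; apply: (chiD).
exists k => [[[n chi] [? chiI]]] /= kn s; apply: (chiI).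
by case: (I_ideal n) => _ _; apply; apply: chain_le Ia.
Qed.

Definition chain_fam (a : RR R) : charfam R chain_level :=
  if pselect (chain_union a) is left h then exist _ _ (chain_fam_axiom h) else 0.

Lemma chain_famE a x s : chain_union a -> fval (chain_fam a) x s = (sval x).2 ((s : R^c) *: a).
Proof. by move=> h; rewrite /chain_fam; case: pselect. Qed.

Lemma chain_fam_hom : hom_on chain_union chain_fam.
Proof.
have [_ UD UZ] := right_ideal_chain_union.
split=> [a b Ua Ub | r a Ua]; apply: fval_inj => x s.
  have Uab := UD _ _ Ua Ub.
  by rewrite fvalD !chain_famE // scalerDr; case: x => [[n chi] [chiD ?]]; apply: (chiD).
by have Ura := UZ r _ Ua; rewrite fvalZ !chain_famE // scalerA.
Qed.

Lemma chain_stationary : injective_mod (charfam R chain_level) ->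
  exists N, forall n, (N <= n)%N -> forall x, I n x <-> I N x.
Proof.
move=> inj.
have [g gE] := inj _ _ right_ideal_chain_union _ chain_fam_hom.
have [N gN] : exists N, forall x, (N <= chain_level x)%N -> forall s, fval (g 1) x s = 0.
  by case: (g 1) => e [? eN].
exists N => n Nn a; split=> [Ia|]; last exact: chain_le.
apply: contrapT => nIa; have [K0 KD KZ] := I_ideal N.
have [chi [chiD chiI chia]] := character_separates K0 KD (submoduleN (I_ideal N)) nIa.
have a1 : (a : R^c) *: (1 : RR R) = a by rewrite /GRing.scale /= mulr1.
have := chain_famE (exist _ (N, chi) (conj chiD chiI)) 1 (ex_intro _ n Ia).
rewrite -gE; last by exists n.
by rewrite -{1}a1 linearZ fvalZ gN //= scale1r => /esym/eqP; apply/negP.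
Qed.

End AscendingChain.

Lemma noetherian_of_F_injective_injective (R : pzRingType) :
  (forall M : rmodType R, F_injective M -> injective_mod M) -> right_noetherian R.
Proof.
move=> Finj I I_ideal I_mono.
exact/(chain_stationary I_ideal I_mono)/Finj/charfam_F_injective.
Qed.

Theorem proposition2p16 (R : pzRingType) :
  [<-> right_noetherian R;
       forall M : rmodType R, F_injective M -> injective_mod M;
       forall M : rmodType R, F_injective M -> quasi_pseudo_principally_injective M].
Proof.
tfae.
- move=> noethR M Minj; apply: baer => I rI.
  exact: Minj rI (noetherian_fin_gen noethR rI).
- by move=> Finj M /Finj; apply: injective_qppi.
- by move=> qppi; apply: noetherian_of_F_injective_injective => M; apply: injective_of_qppi.
Qed.
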